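(* Let $L,M,N$ be integers with $\min\{L,M,N\}\ge 2$ and let ${\cal R}=[0,L]\times[0,M]\times[0,N]$. Up to a permutation of the four colors, there is exactly one slab-type coloring of ${\cal R}$.
   Context: Unit cubes are sets $[x,x+1]\times[y,y+1]\times[z,z+1]$ with $(x,y,z)\in\mathbb{Z}^3$. A slab is a $2\times2\times1$ parallelepiped (in any of the three orientations) which is a union of four unit cubes. A slab-type coloring of a region ${\cal R}$ (a finite union of unit cubes) is an assignment of one of four colors to each unit cube of ${\cal R}$ such that every slab contained in ${\cal R}$ covers exactly one cube of each color. *)

From mathcomp Require Import all_boot all_fingroup.
Set Implicit Arguments. Unset Strict Implicit. Unset Printing Implicit Defensive.

(* A unit cube [x,x+1]x[y,y+1]x[z,z+1] is identified with its corner (x,y,z).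
   Since the region lies in the nonnegative octant, nat coordinates suffice. *)
Definition cube := (nat * nat * nat)%type.

Definition in_box (L M N : nat) (p : cube) : bool :=
  let: (x, y, z) := p in [&& x < L, y < M & z < N].

(* The four unit cubes of a slab with lowest corner (x,y,z) and orientation o:
   o = 0 : 2x2x1 (spanning x and y), o = 1 : 2x1x2 (x and z), o = 2 : 1x2x2 (y and z). *)
Definition slab_cubes (o : 'I_3) (x y z : nat) : seq cube :=
  match val o with
  | 0 => [:: (x, y, z); (x.+1, y, z); (x, y.+1, z); (x.+1, y.+1, z)]
  | 1 => [:: (x, y, z); (x.+1, y, z); (x, y, z.+1); (x.+1, y, z.+1)]
  | _ => [:: (x, y, z); (x, y.+1, z); (x, y, z.+1); (x, y.+1, z.+1)]
  end.

(* A coloring of the region with four colors; values outside the region are irrelevant. *)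
Definition slab_type_coloring (L M N : nat) (c : cube -> 'I_4) : Prop :=
  forall (o : 'I_3) (x y z : nat),
    all (in_box L M N) (slab_cubes o x y z) ->
    forall k : 'I_4, count (fun p => c p == k) (slab_cubes o x y z) = 1.

(* In a 2x2x2 block all six faces are slabs, so every face shows all four
   colors; a corner's color must then reappear on the opposite face, and the
   two faces through the corner exclude all of it but the antipodal corner.
   Hence the color is invariant under diagonal moves (+-1, +-1, +-1), which,
   when all sides are at least 2, connect every cube (x, y, z) of the box to
   the cube (x + z mod 2, y + z mod 2, 0).  These four cubes form a slab, so
   every slab-type coloring is a relabeling of the coloring by the parities of
   x + z and y + z, and that coloring is slab-type by direct inspection. *)

From mathcomp Require Import all_boot all_fingroup zify.
Set Implicit Arguments. Unset Strict Implicit.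

Lemma mem_uniq_card (T : finType) (s : seq T) (w : T) :
  uniq s -> size s = #|T| -> w \in s.
Proof.
move=> uniq_s size_s.
have sub_enum : {subset s <= enum T} by move=> x _; rewrite mem_enum.
have le_size : size (enum T) <= size s by rewrite -cardE size_s.
by have [_ ->] := uniq_min_size uniq_s sub_enum le_size; rewrite mem_enum.
Qed.

Lemma rainbow_cube_antipodal (T : finType) (a000 a100 a010 a110 a001 a101 a011 a111 : T) :
  #|T| = 4 ->
  uniq [:: a000; a100; a010; a110] -> uniq [:: a001; a101; a011; a111] ->
  uniq [:: a000; a100; a001; a101] -> uniq [:: a010; a110; a011; a111] ->
  uniq [:: a000; a010; a001; a011] -> uniq [:: a100; a110; a101; a111] ->
  [/\ a000 = a111, a100 = a011, a010 = a101 & a001 = a110].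
Proof.
move=> card_T z0 z1 y0 y1 x0 x1.
have in_face w (s : seq T) : uniq s -> size s = 4 -> w \in s.
  by move=> uniq_s size_s; rewrite mem_uniq_card // card_T.
split; [ move: (in_face a000 _ z1 erefl) | move: (in_face a100 _ z1 erefl)
       | move: (in_face a010 _ z1 erefl) | move: (in_face a001 _ z0 erefl) ];
  rewrite !inE => /or4P [] /eqP E //; subst;
  by move: y0 y1 x0 x1; rewrite /= !inE !eqxx /= ?orbT ?orTb ?andbF.
Qed.

Definition adjacent (m n : nat) : bool := (m == n.+1) || (n == m.+1).

Lemma adjacentC : symmetric adjacent.
Proof. by move=> m n; rewrite /adjacent orbC. Qed.

Definition neighbour (n : nat) : nat := if n is n'.+1 then n' else 1.

Lemma adjacent_neighbour n : adjacent n (neighbour n).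
Proof. by case: n => [|n]; rewrite /adjacent eqxx ?orbT. Qed.

Lemma neighbour_lt K n : 1 < K -> n < K -> neighbour n < K.
Proof. by case: n => //= n _ /ltnW. Qed.

Lemma odd_neighbour n : odd (neighbour n) = ~~ odd n.
Proof. by case: n => //= n; rewrite negbK. Qed.

Lemma bits_lt4 (a b : bool) : a + b.*2 < 4.
Proof. by case: a; case: b. Qed.

Definition standard_coloring (p : cube) : 'I_4 :=
  let: (x, y, z) := p in Ordinal (bits_lt4 (odd (x + z)) (odd (y + z))).

Definition bottom_corner (k : 'I_4) : cube := (k %% 2, k./2, 0).

Lemma bottom_corner_standard x y z :
  bottom_corner (standard_coloring (x, y, z)) = (odd (x + z) : nat, odd (y + z) : nat, 0).
Proof. by rewrite /=; case: (odd _); case: (odd _). Qed.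

Section SlabTypeColoring.

Variables (L M N : nat) (c : cube -> 'I_4).
Hypothesis slab_c : slab_type_coloring L M N c.

Lemma slab_colors_uniq o x y z :
  all (in_box L M N) (slab_cubes o x y z) -> uniq (map c (slab_cubes o x y z)).
Proof.
move=> /slab_c count1; apply: count_mem_uniq => k.
by rewrite count_map count1 -has_pred1 has_count count_map count1.
Qed.

Lemma block_antipodal x y z : x.+1 < L -> y.+1 < M -> z.+1 < N ->
  [/\ c (x, y, z) = c (x.+1, y.+1, z.+1), c (x.+1, y, z) = c (x, y.+1, z.+1),
      c (x, y.+1, z) = c (x.+1, y, z.+1) & c (x, y, z.+1) = c (x.+1, y.+1, z)].
Proof.
move=> ltxL ltyM ltzN.
have face o (lto : o < 3) := @slab_colors_uniq (Ordinal lto).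
by apply: rainbow_cube_antipodal; rewrite ?card_ord //;
  [ apply: (face 0 isT x y z) | apply: (face 0 isT x y z.+1) | apply: (face 1 isT x y z)
  | apply: (face 1 isT x y.+1 z) | apply: (face 2 isT x y z) | apply: (face 2 isT x.+1 y z) ];
  rewrite /= /in_box; lia.
Qed.

Lemma color_adjacent x y z x' y' z' :
  in_box L M N (x, y, z) -> in_box L M N (x', y', z') ->
  adjacent x x' -> adjacent y y' -> adjacent z z' -> c (x, y, z) = c (x', y', z').
Proof.
wlog -> : x y z x' y' z' / x' = x.+1.
  move=> wlog box box' adx ady adz.
  case/orP: (adx) => /eqP ex; last exact: wlog.
  by symmetry; apply: wlog; rewrite // adjacentC.
move=> /and3P[_ ltyM ltzN] /and3P[ltxL ltyM' ltzN'] _.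
case/orP=> /eqP ey; case/orP=> /eqP ez; subst.
- by case: (block_antipodal ltxL ltyM ltzN).
- by case: (block_antipodal ltxL ltyM ltzN').
- by case: (block_antipodal ltxL ltyM' ltzN).
- by case: (block_antipodal ltxL ltyM' ltzN').
Qed.

Hypotheses (L_gt1 : 1 < L) (M_gt1 : 1 < M) (N_gt1 : 1 < N).

Lemma color_shift2_x x y z :
  in_box L M N (x.+2, y, z) -> c (x.+2, y, z) = c (x, y, z).
Proof.
move=> box; have /and3P[ltxL ltyM ltzN] := box.
have box_mid : in_box L M N (x.+1, neighbour y, neighbour z).
  by apply/and3P; split; [exact: ltnW | exact: neighbour_lt | exact: neighbour_lt].
have box_end : in_box L M N (x, y, z) by rewrite /in_box; lia.
transitivity (c (x.+1, neighbour y, neighbour z)).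
  by apply: color_adjacent; rewrite ?adjacent_neighbour // /adjacent eqxx.
by apply: color_adjacent; rewrite // adjacentC ?adjacent_neighbour // /adjacent eqxx ?orbT.
Qed.

Lemma color_shift2_y x y z :
  in_box L M N (x, y.+2, z) -> c (x, y.+2, z) = c (x, y, z).
Proof.
move=> box; have /and3P[ltxL ltyM ltzN] := box.
have box_mid : in_box L M N (neighbour x, y.+1, neighbour z).
  by apply/and3P; split; [exact: neighbour_lt | exact: ltnW | exact: neighbour_lt].
have box_end : in_box L M N (x, y, z) by rewrite /in_box; lia.
transitivity (c (neighbour x, y.+1, neighbour z)).
  by apply: color_adjacent; rewrite ?adjacent_neighbour // /adjacent eqxx.
by apply: color_adjacent; rewrite // adjacentC ?adjacent_neighbour // /adjacent eqxx ?orbT.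
Qed.

Lemma color_odd_x x y z : in_box L M N (x, y, z) -> c (x, y, z) = c (odd x : nat, y, z).
Proof.
move=> /and3P[ltxL ltyM ltzN].
suff shift k : odd x + k.*2 < L -> c (odd x + k.*2, y, z) = c (odd x : nat, y, z).
  by rewrite -{1}(odd_double_half x) shift ?odd_double_half.
elim: k => [|k IH] ltkL; first by rewrite addn0.
rewrite doubleS !addnS color_shift2_x ?IH //; first lia.
by rewrite /in_box; lia.
Qed.

Lemma color_odd_y x y z : in_box L M N (x, y, z) -> c (x, y, z) = c (x, odd y : nat, z).
Proof.
move=> /and3P[ltxL ltyM ltzN].
suff shift k : odd y + k.*2 < M -> c (x, odd y + k.*2, z) = c (x, odd y : nat, z).
  by rewrite -{1}(odd_double_half y) shift ?odd_double_half.
elim: k => [|k IH] ltkM; first by rewrite addn0.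
rewrite doubleS !addnS color_shift2_y ?IH //; first lia.
by rewrite /in_box; lia.
Qed.

Lemma color_parity_class x y z :
  in_box L M N (x, y, z) -> c (x, y, z) = c (odd (x + z) : nat, odd (y + z) : nat, 0).
Proof.
elim: z x y => [|z IH] x y box.
  have ltoddL : odd x < L by apply: leq_ltn_trans (leq_b1 _) L_gt1.
  have /and3P[_ ltyM _] := box.
  by rewrite !addn0 color_odd_x // color_odd_y // /in_box ltoddL ltyM (ltnW N_gt1).
have /and3P[ltxL ltyM ltzN] := box.
have box' : in_box L M N (neighbour x, neighbour y, z).
  by apply/and3P; split; [exact: neighbour_lt | exact: neighbour_lt | exact: ltnW].
rewrite (@color_adjacent _ _ _ (neighbour x) (neighbour y) z) ?adjacent_neighbour //.
by rewrite IH // !addnS /= !oddD !odd_neighbour !addNb.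
Qed.

Lemma slab_type_coloring_standard_perm :
  exists s : {perm 'I_4}, forall p, in_box L M N p -> c p = s (standard_coloring p).
Proof.
pose f k := c (bottom_corner k).
have f_inj : injective f.
  apply/injectiveP; rewrite /injectiveb /dinjectiveb.
  have -> : map f (enum 'I_4) = map c (slab_cubes ord0 0 0 0).
    by rewrite !enum_ordSl enum_ord0.
  by apply: slab_colors_uniq; rewrite /= /in_box; lia.
exists (perm f_inj) => -[[x y] z] box.
by rewrite permE /f bottom_corner_standard color_parity_class.
Qed.

End SlabTypeColoring.

Lemma standard_coloring_slab_type L M N : slab_type_coloring L M N standard_coloring.
Proof.
move=> o x y z _ k.
case: o => [[|[|[|//]]] ?]; rewrite /= ?addSn ?addnS /=;
  case: (odd (x + z)); case: (odd (y + z)); case: k => [[|[|[|[|//]]]] ?]; by [].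
Qed.

Unset Implicit Arguments.

Theorem lemma3p2 (L M N : nat) :
  2 <= L -> 2 <= M -> 2 <= N ->
  (exists c : cube -> 'I_4, slab_type_coloring L M N c) /\
  (forall c1 c2 : cube -> 'I_4,
      slab_type_coloring L M N c1 -> slab_type_coloring L M N c2 ->
      exists s : {perm 'I_4}, forall p : cube, in_box L M N p -> c2 p = s (c1 p)).
Proof.
move=> L_gt1 M_gt1 N_gt1; split.
  by exists standard_coloring; apply: standard_coloring_slab_type.
move=> c1 c2 /slab_type_coloring_standard_perm [] // s1 c1E.
move=> /slab_type_coloring_standard_perm [] // s2 c2E.
by exists (s1^-1 * s2)%g => p box; rewrite c1E // c2E // permM permK.
Qed.
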